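(* Let $\Lambda$ be a $k$-graph with no sinks such that $\Lambda^0$ is finite. Then for every $v\in\Lambda^0$ there exist $w\in\Lambda^0$ and $\alpha\in w\Lambda w$ such that $d(\alpha)>0$ and $w\Lambda v\ne\emptyset$.
   Context: A $k$-graph is a countable category $\Lambda$ with a functor $d:\Lambda\to\mathbb{N}^k$ with unique factorisation (for each $\lambda$ and $d(\lambda)=m+n$ there are unique $\mu,\nu$ with $d(\mu)=m$, $d(\nu)=n$, $\lambda=\mu\nu$); $\Lambda^n=d^{-1}(n)$, $\Lambda^0$ = vertices, $uXv=\{\lambda\in X:r(\lambda)=u,s(\lambda)=v\}$. No sinks: $\Lambda^nv\ne\emptyset$ for all $v\in\Lambda^0$ and nonzero $n\in\mathbb{N}^k$. For $m\in\mathbb{N}^k$, $m>0$ means $m_i>0$ for all $i$. *)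

From mathcomp Require Import all_boot.
Set Implicit Arguments. Unset Strict Implicit. Unset Printing Implicit Defensive.

(* Degrees live in N^k, represented as functions 'I_k -> nat,
   compared pointwise (to avoid functional extensionality). *)

(* Composition [comp mu nu] (= mu nu, "first nu then mu") is a total function
   whose values are only constrained when s mu = r nu. *)
Record kgraph (k : nat) := KGraph {
  vert : countType;
  kpath : countType;
  rng : kpath -> vert;
  src : kpath -> vert;
  idp : vert -> kpath;
  comp : kpath -> kpath -> kpath;
  deg : kpath -> 'I_k -> nat;
  rng_id : forall v, rng (idp v) = v;
  src_id : forall v, src (idp v) = v;
  rng_comp : forall mu nu, src mu = rng nu -> rng (comp mu nu) = rng mu;
  src_comp : forall mu nu, src mu = rng nu -> src (comp mu nu) = src nu;
  comp_idl : forall mu, comp (idp (rng mu)) mu = mu;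
  comp_idr : forall mu, comp mu (idp (src mu)) = mu;
  compA : forall la mu nu, src la = rng mu -> src mu = rng nu ->
    comp la (comp mu nu) = comp (comp la mu) nu;
  deg_id : forall v i, deg (idp v) i = 0;
  deg_comp : forall mu nu, src mu = rng nu ->
    forall i, deg (comp mu nu) i = deg mu i + deg nu i;
  unique_fact : forall la (m n : 'I_k -> nat),
    (forall i, deg la i = m i + n i) ->
    exists mu nu, [/\ src mu = rng nu, (forall i, deg mu i = m i),
                      (forall i, deg nu i = n i) & la = comp mu nu] /\
      forall mu' nu', src mu' = rng nu' -> (forall i, deg mu' i = m i) ->
        (forall i, deg nu' i = n i) -> la = comp mu' nu' ->
        mu' = mu /\ nu' = nu
}.

Definition no_sinks k (G : kgraph k) : Prop :=
  forall (v : vert G) (n : 'I_k -> nat), (exists i, n i <> 0) ->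
    exists la : kpath G, src la = v /\ forall i, deg la i = n i.

Definition finite_vertices k (G : kgraph k) : Prop :=
  exists s : seq (vert G), forall v, v \in s.

From Pilot Require Import Defs.
From mathcomp Require Import all_boot.
Set Implicit Arguments. Unset Strict Implicit. Unset Printing Implicit Defensive.

(* Since there are no sinks, each vertex u is the source of a path f u of
   degree (1,...,1).  Composing these paths repeatedly, starting at v, visits
   the ranges v, r(f v), ...; finiteness forces a repetition w, and the part
   of the walk between the two visits of w is a cycle at w of degree
   positive in every coordinate, while the part before reaches w from v. *)

Lemma iter_collision (T : eqType) (s : seq T) (g : T -> T) (a : T) :
  (forall x, x \in s) -> exists j l, j < l /\ iter j g a = iter l g a.
Proof.
move=> sP; pose t := [seq iter j g a | j <- iota 0 (size s).+1].
have /(uniqPn a) [j [l [jl lt e]]] : ~~ uniq t.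
  apply/negP => /uniq_leq_size /(_ (fun x _ => sP x)).
  by rewrite size_map size_iota ltnn.
rewrite size_map size_iota in lt; have jt := ltn_trans jl lt.
rewrite !(nth_map 0) ?size_iota // !nth_iota // !add0n in e.
by exists j, l.
Qed.

Lemma exists_unit_steps k (G : kgraph k) : 0 < k -> no_sinks G ->
  exists f : vert G -> kpath G,
    (forall u, src (f u) = u) /\ forall u i, deg (f u) i = 1.
Proof.
case: k G => // k G _ ns.
have step u : exists la : kpath G, (src la == u) && [forall i, deg la i == 1].
  have [|la [<- dla]] := ns u (fun=> 1); first by exists ord0.
  by exists la; rewrite eqxx; apply/forallP => i; rewrite dla.
exists (fun u => xchoose (step u)).
by split=> [u | u i]; case/andP: (xchooseP (step u)) => /eqP // _ /forallP/(_ i)/eqP.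
Qed.

Section UnitWalk.
Variables (k : nat) (G : kgraph k) (f : vert G -> kpath G).
Hypothesis src_f : forall u, src (f u) = u.
Hypothesis deg_f : forall u i, deg (f u) i = 1.

Definition next_vert (u : vert G) : vert G := rng (f u).

Fixpoint walk (a : vert G) (m : nat) : kpath G :=
  if m is m'.+1 then Defs.comp (f (rng (walk a m'))) (walk a m') else idp a.

Lemma src_walk a m : src (walk a m) = a.
Proof. by elim: m => [|m IHm] /=; rewrite ?src_id // src_comp. Qed.

Lemma rng_walk a m : rng (walk a m) = iter m next_vert a.
Proof. by elim: m => [|m IHm] /=; rewrite ?rng_id // rng_comp // IHm. Qed.

Lemma deg_walk a m i : deg (walk a m) i = m.
Proof. by elim: m => [|m IHm] /=; rewrite ?deg_id // deg_comp // deg_f IHm. Qed.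

End UnitWalk.

Theorem lemma2p9 (k : nat) (G : kgraph k) :
  no_sinks G -> finite_vertices G ->
  forall v : vert G,
    exists (w : vert G) (alpha : kpath G),
      [/\ rng alpha = w, src alpha = w, (forall i, 0 < deg alpha i) &
          exists la : kpath G, rng la = w /\ src la = v].
Proof.
move=> ns [s sP] v; case: (posnP k) G s ns sP v => [-> | k_gt0] G s ns sP v.
  exists v, (@idp _ G v); split; rewrite ?rng_id ?src_id //; first by case.
  by exists (@idp _ G v); rewrite rng_id src_id.
have [f [src_f deg_f]] := exists_unit_steps k_gt0 ns.
have [j [l [jl e]]] := iter_collision (next_vert f) v sP.
exists (iter j (next_vert f) v), (walk f (iter j (next_vert f) v) (l - j)).
split.
- by rewrite rng_walk // -iterD subnK ?(ltnW jl).
- exact: src_walk.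
- by move=> i; rewrite deg_walk // subn_gt0.
- by exists (walk f v j); rewrite rng_walk // src_walk.
Qed.
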